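(* Let $C$ be a cancellative monoid and suppose that $IH^0(C)$ is $0$-bisimple. Then $IH^0(C)$ is $F^*$-inverse if and only if the partially ordered set $P_r(C)$ of principal right ideals of $C$ (ordered by inclusion) is a join semilattice.
   Context: For a right cancellative monoid $C$ and $a\in C$, $\rho_a:C\to C$, $x\mapsto xa$, is regarded as a partial bijection of $C$; the inverse hull $IH(C)$ is the inverse submonoid of the symmetric inverse monoid on $C$ generated by all $\rho_a$, and $IH^0(C)=IH(C)\cup\{\emptyset\}$ with the empty map as zero. An inverse monoid with zero is $0$-bisimple if all its nonzero elements are $\mathscr{D}$-related. The natural partial order on an inverse monoid is $a\le b$ iff $a=eb$ for some idempotent $e$; an inverse monoid is $F^*$-inverse if every nonzero element lies beneath a unique maximal element in this order. A join semilattice is a poset in which any two elements have a least upper bound. *)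

Record cancellative_monoid (C : Type) (mul : C -> C -> C) (one : C) : Prop := {
  cm_assoc : forall x y z, mul x (mul y z) = mul (mul x y) z;
  cm_one_l : forall x, mul one x = x;
  cm_one_r : forall x, mul x one = x;
  cm_cancel_l : forall a x y, mul a x = mul a y -> x = y;
  cm_cancel_r : forall a x y, mul x a = mul y a -> x = y
}.

(* Partial maps of C, represented by their graphs (relations).
   Every element of the inverse hull is a partial bijection. *)
Definition pmap (C : Type) := C -> C -> Prop.

Definition rho {C : Type} (mul : C -> C -> C) (a : C) : pmap C :=
  fun x y => y = mul x a.

(* Product in the symmetric inverse monoid: (f g) = "first f, then g"
   (maps act on the right, so rho_a rho_b = rho_(ab)). *)
Definition pcomp {C : Type} (f g : pmap C) : pmap C :=
  fun x z => exists y, f x y /\ g y z.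

Definition pinv {C : Type} (f : pmap C) : pmap C := fun x y => f y x.

Definition pempty {C : Type} : pmap C := fun _ _ => False.

(* The inverse hull IH(C): inverse submonoid of the symmetric inverse monoid
   generated by all rho_a (the identity is rho_1). *)
Inductive IH {C : Type} (mul : C -> C -> C) : pmap C -> Prop :=
| IH_rho : forall a, IH mul (rho mul a)
| IH_comp : forall f g, IH mul f -> IH mul g -> IH mul (pcomp f g)
| IH_inv : forall f, IH mul f -> IH mul (pinv f).

Definition IH0 {C : Type} (mul : C -> C -> C) (f : pmap C) : Prop :=
  IH mul f \/ f = pempty.

Definition Rrel {C : Type} (S : pmap C -> Prop) (a b : pmap C) : Prop :=
  exists u v, S u /\ S v /\ a = pcomp b u /\ b = pcomp a v.
Definition Lrel {C : Type} (S : pmap C -> Prop) (a b : pmap C) : Prop :=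
  exists u v, S u /\ S v /\ a = pcomp u b /\ b = pcomp v a.
Definition Drel {C : Type} (S : pmap C -> Prop) (a b : pmap C) : Prop :=
  exists c, S c /\ Rrel S a c /\ Lrel S c b.

Definition zero_bisimple {C : Type} (S : pmap C -> Prop) (z : pmap C) : Prop :=
  forall a b, S a -> S b -> a <> z -> b <> z -> Drel S a b.

Definition nat_le {C : Type} (S : pmap C -> Prop) (a b : pmap C) : Prop :=
  exists e, S e /\ pcomp e e = e /\ a = pcomp e b.

Definition maximal {C : Type} (S : pmap C -> Prop) (m : pmap C) : Prop :=
  S m /\ forall x, S x -> nat_le S m x -> x = m.

Definition Fstar_inverse {C : Type} (S : pmap C -> Prop) (z : pmap C) : Prop :=
  forall a, S a -> a <> z ->
    exists m, (maximal S m /\ nat_le S a m) /\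
      forall m', maximal S m' -> nat_le S a m' -> m' = m.

Definition pr_ideal {C : Type} (mul : C -> C -> C) (a : C) : C -> Prop :=
  fun x => exists c, x = mul a c.

Definition subset {C : Type} (A B : C -> Prop) : Prop := forall x, A x -> B x.

Definition Pr_join_semilattice {C : Type} (mul : C -> C -> C) : Prop :=
  forall a b, exists c,
    subset (pr_ideal mul a) (pr_ideal mul c) /\
    subset (pr_ideal mul b) (pr_ideal mul c) /\
    forall d, subset (pr_ideal mul a) (pr_ideal mul d) ->
              subset (pr_ideal mul b) (pr_ideal mul d) ->
              subset (pr_ideal mul c) (pr_ideal mul d).

From Stdlib Require Import FunctionalExtensionality PropExtensionality.

(* Under 0-bisimplicity every nonzero element of IH^0(C) has the form
   rho_a^-1 rho_b, the map s a |-> s b, and rho_a^-1 rho_b lies below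
   rho_c^-1 rho_d exactly when (a, b) = u (c, d) for some u.  So F*-inversity
   says that every pair (a, b) has, up to a unit, a unique maximal right factor
   (c, d) for this preorder on pairs.  The corresponding left factor u of
   (a, b) = u (c, d) is then the generator of the join aC v bC, and conversely
   a join uC yields such a maximal factor, by cancellation. *)

Section CancellativeMonoid.

Context {C : Type} (mul : C -> C -> C) (one : C).
Hypothesis HC : cancellative_monoid C mul one.

Let mulmA := cm_assoc _ _ _ HC.
Let mul1m := cm_one_l _ _ _ HC.
Let mulm1 := cm_one_r _ _ _ HC.
Let mulmI := cm_cancel_l _ _ _ HC.
Let mulIm := cm_cancel_r _ _ _ HC.

Definition lmultiple (a b c d : C) : Prop :=
  exists u, a = mul u c /\ b = mul u d.

Definition max_pair (c d : C) : Prop :=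
  forall c' d', lmultiple c d c' d' -> lmultiple c' d' c d.

Definition pair_Fstar : Prop :=
  forall a b, exists c d, (max_pair c d /\ lmultiple a b c d) /\
    forall c' d', max_pair c' d' -> lmultiple a b c' d' -> lmultiple c' d' c d.

Lemma mul_eq_one_comm w t : mul w t = one -> mul t w = one.
Proof.
  intro Hwt. apply (mulmI w).
  rewrite mulmA, Hwt, mul1m, mulm1. reflexivity.
Qed.

Lemma pr_ideal_subset a v :
  subset (pr_ideal mul a) (pr_ideal mul v) <-> exists c, a = mul v c.
Proof.
  split.
  - intro Hav. apply Hav. exists one. symmetry. apply mulm1.
  - intros [c ->] x [y ->]. exists (mul c y). symmetry. apply mulmA.
Qed.

Lemma pair_Fstar_join : pair_Fstar -> Pr_join_semilattice mul.
Proof.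
  intros HF a b.
  destruct (HF a b) as [c [d [[_ [u [Ha Hb]]] Huniq]]].
  exists u. split; [|split].
  - apply pr_ideal_subset. eauto.
  - apply pr_ideal_subset. eauto.
  - intros v Hav Hbv.
    apply pr_ideal_subset in Hav as [c' Ha'].
    apply pr_ideal_subset in Hbv as [d' Hb'].
    destruct (HF c' d') as [c0 [d0 [[Hmax0 [w [Hc' Hd']]] _]]].
    assert (Hab0 : lmultiple a b c0 d0).
    { exists (mul v w). rewrite <- !mulmA, <- Hc', <- Hd'. auto. }
    destruct (Huniq c0 d0 Hmax0 Hab0) as [s [Hc0 _]].
    apply pr_ideal_subset. exists (mul w s).
    apply (mulIm c). rewrite <- Ha, Ha', Hc', Hc0, !mulmA. reflexivity.
Qed.

Lemma join_pair_Fstar : Pr_join_semilattice mul -> pair_Fstar.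
Proof.
  intros HJ a b.
  destruct (HJ a b) as [u [Hau [Hbu Hleast]]].
  apply pr_ideal_subset in Hau as [c Ha].
  apply pr_ideal_subset in Hbu as [d Hb].
  exists c, d. split; [split|].
  - intros c' d' [w [Hc Hd]].
    assert (Huw : subset (pr_ideal mul u) (pr_ideal mul (mul u w))).
    { apply Hleast; apply pr_ideal_subset.
      - exists c'. rewrite Ha, Hc, mulmA. reflexivity.
      - exists d'. rewrite Hb, Hd, mulmA. reflexivity. }
    apply pr_ideal_subset in Huw as [t Ht].
    assert (Htw : mul t w = one).
    { apply mul_eq_one_comm, (mulmI u). rewrite mulmA, <- Ht, mulm1. reflexivity. }
    exists t. rewrite Hc, Hd, !mulmA, Htw, !mul1m. auto.
  - exists u. auto.
  - intros c' d' _ [v [Ha' Hb']].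
    assert (Huv : subset (pr_ideal mul u) (pr_ideal mul v)).
    { apply Hleast; apply pr_ideal_subset; eauto. }
    apply pr_ideal_subset in Huv as [s Hs].
    exists s. split.
    + apply (mulmI v). rewrite mulmA, <- Hs, <- Ha, <- Ha'. reflexivity.
    + apply (mulmI v). rewrite mulmA, <- Hs, <- Hb, <- Hb'. reflexivity.
Qed.

Lemma pair_Fstar_iff_join : pair_Fstar <-> Pr_join_semilattice mul.
Proof. split; [apply pair_Fstar_join | apply join_pair_Fstar]. Qed.

Lemma pmap_ext (f g : pmap C) : (forall x y, f x y <-> g x y) -> f = g.
Proof.
  intro Hfg. apply functional_extensionality; intro x.
  apply functional_extensionality; intro y.
  apply propositional_extensionality, Hfg.
Qed.

(* The last clause, commuting with left translations, is what pins an element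
   of IH(C) down to a single pair (a, b) once its domain is a principal
   left ideal Ca. *)
Definition compatible_pinj (f : pmap C) : Prop :=
  (forall x y y', f x y -> f x y' -> y = y') /\
  (forall x x' y, f x y -> f x' y -> x = x') /\
  (forall z x y, f x y -> f (mul z x) (mul z y)).

Lemma IH_compatible_pinj f : IH mul f -> compatible_pinj f.
Proof.
  induction 1 as [a | f g _ [Ff [If Mf]] _ [Fg [Ig Mg]] | f _ [Ff [If Mf]]].
  - unfold rho. repeat split.
    + intros x y y' -> ->. reflexivity.
    + intros x x' y -> Hx. exact (mulIm a x x' Hx).
    + intros z x y ->. apply mulmA.
  - unfold pcomp. repeat split.
    + intros x y y' [w [H1 H2]] [w' [H1' H2']].
      rewrite (Ff _ _ _ H1 H1') in H2. exact (Fg _ _ _ H2 H2').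
    + intros x x' y [w [H1 H2]] [w' [H1' H2']].
      rewrite (Ig _ _ _ H2 H2') in H1. exact (If _ _ _ H1 H1').
    + intros z x y [w [H1 H2]]. eauto.
  - unfold pinv. repeat split.
    + intros x y y' H1 H2. exact (If _ _ _ H1 H2).
    + intros x x' y H1 H2. exact (Ff _ _ _ H1 H2).
    + intros z x y H. exact (Mf z y x H).
Qed.

Lemma compatible_pinj_idempotent_id e x y :
  compatible_pinj e -> pcomp e e = e -> e x y -> x = y.
Proof.
  intros [Fe [Ie _]] Hee Hxy.
  assert (Hyy : e y y).
  { pose proof Hxy as Hxy'. rewrite <- Hee in Hxy'. destruct Hxy' as [w [Hxw Hwy]].
    rewrite (Fe _ _ _ Hxw Hxy) in Hwy. exact Hwy. }
  exact (Ie _ _ _ Hxy Hyy).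
Qed.

Definition rho_inv_rho (a b : C) : pmap C := pcomp (pinv (rho mul a)) (rho mul b).

Lemma rho_inv_rhoE a b x y :
  rho_inv_rho a b x y <-> exists s, x = mul s a /\ y = mul s b.
Proof. reflexivity. Qed.

Lemma IH_rho_inv_rho a b : IH mul (rho_inv_rho a b).
Proof. apply IH_comp; [apply IH_inv|]; apply IH_rho. Qed.

Lemma rho_inv_rho_self a b : rho_inv_rho a b a b.
Proof. exists one. split; symmetry; apply mul1m. Qed.

Lemma rho_inv_rho_neq0 a b : rho_inv_rho a b <> pempty.
Proof.
  intro E. pose proof (rho_inv_rho_self a b) as Hab. rewrite E in Hab. exact Hab.
Qed.

Lemma rho_inv_rho_inj a b c d :
  rho_inv_rho a b = rho_inv_rho c d -> lmultiple a b c d.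
Proof.
  intro E. pose proof (rho_inv_rho_self a b) as Hab. rewrite E in Hab. exact Hab.
Qed.

Lemma rho_inv_rho_eq a b c d :
  lmultiple a b c d -> lmultiple c d a b -> rho_inv_rho a b = rho_inv_rho c d.
Proof.
  intros [u [Ha Hb]] [v [Hc Hd]].
  apply pmap_ext; intros x y; rewrite !rho_inv_rhoE; split.
  - intros [s [-> ->]]. exists (mul s u). rewrite Ha, Hb, !mulmA. auto.
  - intros [s [-> ->]]. exists (mul s v). rewrite Hc, Hd, !mulmA. auto.
Qed.

Lemma nat_le_rho_inv_rho a b c d :
  nat_le (IH0 mul) (rho_inv_rho a b) (rho_inv_rho c d) <-> lmultiple a b c d.
Proof.
  split.
  - intros [e [Se [Hee Hab]]].
    pose proof (rho_inv_rho_self a b) as Hab'. rewrite Hab in Hab'.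
    destruct Hab' as [y [Hay Hyb]].
    assert (eIH : IH mul e) by (destruct Se as [Se | ->]; [exact Se | destruct Hay]).
    rewrite <- (compatible_pinj_idempotent_id e a y (IH_compatible_pinj e eIH) Hee Hay)
      in Hyb.
    exact Hyb.
  - intros [u [Ha Hb]]. exists (rho_inv_rho a a).
    split; [left; apply IH_rho_inv_rho | split].
    + apply pmap_ext; intros x z; split.
      * intros [y [Hxy Hyz]].
        apply rho_inv_rhoE in Hxy as [s [-> ->]].
        apply rho_inv_rhoE in Hyz as [t [Ht ->]].
        exists t. split; [exact Ht | reflexivity].
      * intro Hxz. exists z. split; [exact Hxz|].
        apply rho_inv_rhoE in Hxz as [s [-> ->]]. exists s. split; reflexivity.
    + apply pmap_ext; intros x z; split.
      * intros Hxz. apply rho_inv_rhoE in Hxz as [s [-> ->]].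
        exists (mul s a). split; apply rho_inv_rhoE.
        -- exists s. split; reflexivity.
        -- exists (mul s u). rewrite Ha, Hb, !mulmA. split; reflexivity.
      * intros [y [Hxy Hyz]].
        apply rho_inv_rhoE in Hxy as [s [-> ->]].
        apply rho_inv_rhoE in Hyz as [t [Ht ->]].
        rewrite Ha, mulmA in Ht. apply mulIm in Ht.
        apply rho_inv_rhoE. exists s. rewrite Hb, mulmA, <- Ht. split; reflexivity.
Qed.

Lemma nat_le_neq0 (S : pmap C -> Prop) f m :
  nat_le S f m -> f <> pempty -> m <> pempty.
Proof.
  intros [e [_ [_ ->]]] Hf ->. apply Hf.
  apply pmap_ext; intros x y; split; [intros [w [_ []]] | intros []].
Qed.

Lemma compatible_pinj_rho_inv_rho f a b :
  compatible_pinj f -> f a b -> (forall x y, f x y -> exists w, x = mul w a) ->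
  f = rho_inv_rho a b.
Proof.
  intros [Ff [_ Mf]] Hab Hdom.
  apply pmap_ext; intros x y; rewrite rho_inv_rhoE; split.
  - intro Hxy. destruct (Hdom x y Hxy) as [w ->].
    exists w. split; [reflexivity|]. exact (Ff _ _ _ Hxy (Mf w a b Hab)).
  - intros [s [-> ->]]. apply Mf, Hab.
Qed.

Section ZeroBisimple.

Hypothesis Hbis : zero_bisimple (IH0 mul) pempty.

(* A nonzero f is D-related to the identity rho_1 through some c in IH(C)
   with the domain of f and image all of C; the preimage a of 1 under c
   then forces dom f = Ca, and f = rho_a^-1 rho_b with b the image of a. *)
Lemma IH0_neq0_rho_inv_rho f :
  IH0 mul f -> f <> pempty -> exists a b, f = rho_inv_rho a b.
Proof.
  intros Sf Hf.
  assert (Hid : forall x, rho mul one x x) by (intro x; symmetry; apply mulm1).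
  assert (id_neq0 : rho mul one <> pempty).
  { intro E. pose proof (Hid one) as H1. rewrite E in H1. exact H1. }
  destruct (Hbis f (rho mul one) Sf (or_introl (IH_rho mul one)) Hf id_neq0)
    as [c [Sc [[u [v [_ [_ [Ef Ec]]]]] [u' [v' [_ [_ [_ Eid]]]]]]]].
  assert (c_onto : forall x, exists y, c y x).
  { intro x. pose proof (Hid x) as Hx. rewrite Eid in Hx.
    destruct Hx as [y [_ Hyx]]. eauto. }
  assert (cIH : IH mul c).
  { destruct Sc as [Sc | ->]; [exact Sc|]. destruct (c_onto one) as [y []]. }
  destruct (IH_compatible_pinj c cIH) as [_ [Ic Mc]].
  destruct (c_onto one) as [a Ha].
  assert (dom_c : forall x w, c x w -> x = mul w a).
  { intros x w Hxw. apply (Ic _ _ w Hxw). rewrite <- (mulm1 w) at 2. apply Mc, Ha. }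
  assert (Hb : exists b, f a b).
  { rewrite Ec in Ha. destruct Ha as [b [Hab _]]. eauto. }
  destruct Hb as [b Hab]. exists a, b.
  apply compatible_pinj_rho_inv_rho; [| exact Hab |].
  - apply IH_compatible_pinj. destruct Sf as [Sf | ->]; [exact Sf | contradiction].
  - intros x y Hxy. rewrite Ef in Hxy. destruct Hxy as [w [Hxw _]].
    exists w. exact (dom_c x w Hxw).
Qed.

Lemma maximal_rho_inv_rho c d :
  maximal (IH0 mul) (rho_inv_rho c d) <-> max_pair c d.
Proof.
  split.
  - intros [_ Hmax] c' d' Hcd.
    apply rho_inv_rho_inj, Hmax.
    + left. apply IH_rho_inv_rho.
    + apply nat_le_rho_inv_rho, Hcd.
  - intro Hmax. split; [left; apply IH_rho_inv_rho|].
    intros x Sx Hx.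
    destruct (IH0_neq0_rho_inv_rho x Sx (nat_le_neq0 _ _ _ Hx (rho_inv_rho_neq0 c d)))
      as [c' [d' ->]].
    apply nat_le_rho_inv_rho in Hx.
    symmetry. apply rho_inv_rho_eq; [exact Hx | apply Hmax, Hx].
Qed.

Lemma Fstar_inverse_iff_pair_Fstar : Fstar_inverse (IH0 mul) pempty <-> pair_Fstar.
Proof.
  split.
  - intros HF a b.
    destruct (HF _ (or_introl (IH_rho_inv_rho a b)) (rho_inv_rho_neq0 a b))
      as [m [[Hm Habm] Huniq]].
    destruct (IH0_neq0_rho_inv_rho m (proj1 Hm)
                (nat_le_neq0 _ _ _ Habm (rho_inv_rho_neq0 a b))) as [c [d ->]].
    exists c, d. split.
    + split; [apply maximal_rho_inv_rho, Hm | apply nat_le_rho_inv_rho, Habm].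
    + intros c' d' Hmax' Hab'. apply rho_inv_rho_inj, Huniq.
      * apply maximal_rho_inv_rho, Hmax'.
      * apply nat_le_rho_inv_rho, Hab'.
  - intros HP f Sf Hf.
    destruct (IH0_neq0_rho_inv_rho f Sf Hf) as [a [b ->]].
    destruct (HP a b) as [c [d [[Hmax Hab] Huniq]]].
    exists (rho_inv_rho c d). split.
    + split; [apply maximal_rho_inv_rho, Hmax | apply nat_le_rho_inv_rho, Hab].
    + intros m' Hm' Habm'.
      destruct (IH0_neq0_rho_inv_rho m' (proj1 Hm')
                  (nat_le_neq0 _ _ _ Habm' Hf)) as [c' [d' ->]].
      apply maximal_rho_inv_rho in Hm'. apply nat_le_rho_inv_rho in Habm'.
      pose proof (Huniq c' d' Hm' Habm') as Hc'd'.
      apply rho_inv_rho_eq; [exact Hc'd' | apply Hm', Hc'd'].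
Qed.

End ZeroBisimple.

End CancellativeMonoid.

Theorem proposition4p2 (C : Type) (mul : C -> C -> C) (one : C)
  (HC : cancellative_monoid C mul one)
  (Hbis : zero_bisimple (IH0 mul) pempty) :
  Fstar_inverse (IH0 mul) pempty <-> Pr_join_semilattice mul.
Proof.
  rewrite (Fstar_inverse_iff_pair_Fstar mul one HC Hbis).
  exact (pair_Fstar_iff_join mul one HC).
Qed.
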